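(* Let $A>2$ be a fixed positive integer and let $(x_m)$ be defined by $x_0=0$, $x_1=1$, $x_{m+1}=Ax_m-x_{m-1}$. Let $n\ge3$ and consider the Markov chain on $\{0,1,\dots,n-1\}$ with $n\times n$ transition probability matrix $\mathbf P(A)=(P_{ij})$ given by: $P_{00}=1-\frac1A$, $P_{01}=\frac1A$; $P_{10}=1-\frac1A$, $P_{12}=\frac1A$; for $2\le i\le n-2$: $P_{i0}=1-\frac2A$, $P_{i,i-1}=\frac1A$, $P_{i,i+1}=\frac1A$; $P_{n-1,0}=1-\frac1A$, $P_{n-1,n-2}=\frac1A$; all other entries $0$. Then the steady state probability vector $\vec\pi=(\pi_0,\dots,\pi_{n-1})$ (the unique probability vector with $\vec\pi=\vec\pi\mathbf P(A)$) is given by $$\pi_i=\frac{x_{n-i}}{\sum_{l=1}^n x_l},\qquad i=0,1,\dots,n-1.$$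
   Context: The sequence $(x_m)$ defined by $x_0=0,x_1=1,x_{m+1}=Ax_m-x_{m-1}$ is called a balancing-like sequence; for $A=6$ it is the sequence of balancing numbers. *)

From HB Require Import structures.
From mathcomp Require Import all_boot all_order all_algebra.
Set Implicit Arguments. Unset Strict Implicit. Unset Printing Implicit Defensive.
Import Order.TTheory GRing.Theory Num.Theory.
Local Open Scope ring_scope.

(* Balancing-like sequence x_0 = 0, x_1 = 1, x_{m+1} = A x_m - x_{m-1},
   computed as pairs (x_m, x_{m+1}). *)
Fixpoint bl_pair (R : nzRingType) (A : R) (m : nat) : R * R :=
  match m with
  | 0%N => (0, 1)
  | m'.+1 => let p := bl_pair A m' in (p.2, A * p.2 - p.1)
  end.

Definition bl_seq (R : nzRingType) (A : R) (m : nat) : R := (bl_pair A m).1.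

Definition Pmat (R : fieldType) (A : R) (n : nat) : 'M[R]_n :=
  \matrix_(i < n, j < n)
    if (nat_of_ord i == 0)%N then
      (if (nat_of_ord j == 0)%N then 1 - A^-1
       else if (nat_of_ord j == 1)%N then A^-1 else 0)
    else if (nat_of_ord i == 1)%N then
      (if (nat_of_ord j == 0)%N then 1 - A^-1
       else if (nat_of_ord j == 2)%N then A^-1 else 0)
    else if (nat_of_ord i == n.-1)%N then
      (if (nat_of_ord j == 0)%N then 1 - A^-1
       else if (nat_of_ord j == n - 2)%N then A^-1 else 0)
    else
      (if (nat_of_ord j == 0)%N then 1 - 2 / A
       else if ((nat_of_ord j == (nat_of_ord i).-1) || (nat_of_ord j == (nat_of_ord i).+1))%N
            then A^-1 else 0).

Definition prob_vec (R : numDomainType) (n : nat) (p : 'rV[R]_n) : Prop :=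
  (forall i, 0 <= p ord0 i) /\ \sum_(i < n) p ord0 i = 1.

From HB Require Import structures.
From mathcomp Require Import all_boot all_order all_algebra.
From mathcomp Require Import zify ring lra.
Set Implicit Arguments. Unset Strict Implicit. Unset Printing Implicit Defensive.
Import Order.TTheory GRing.Theory Num.Theory.
Local Open Scope ring_scope.

(* Put y_k = pi_(n-k), with y_0 = 0.  The balance equations of the columns
   j = 1, ..., n-1 say exactly that y_(k+1) = A y_k - y_(k-1), so y_k = x_k y_1:
   a stationary vector is a multiple of (x_(n-i))_i, and normalisation fixes
   the multiple.  Conversely (x_(n-i))_i satisfies these equations, and the
   remaining balance equation, that of column 0, reduces to the identity
   (A - 2) (x_1 + ... + x_n) = x_(n+1) - x_n - 1. *)

Section BalancingLike.
Variables (R : nzRingType) (a : R).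
Local Notation x := (bl_seq a).

Lemma bl_seq0 : x 0 = 0. Proof. by []. Qed.

Lemma bl_seq1 : x 1 = 1. Proof. by []. Qed.

Lemma bl_seqSS k : x k.+2 = a * x k.+1 - x k. Proof. by []. Qed.

Lemma bl_seq_unique (y : nat -> R) N :
  y 0%N = 0 -> (forall k, (k.+2 <= N)%N -> y k.+2 = a * y k.+1 - y k) ->
  forall k, (k <= N)%N -> y k = x k * y 1%N.
Proof.
move=> y0 yS.
suff yx k : (k < N)%N -> y k = x k * y 1%N /\ y k.+1 = x k.+1 * y 1%N.
  by case=> [|k] hk; [rewrite y0 bl_seq0 mul0r | case: (yx k hk)].
elim: k => [|k IH] hk; first by rewrite y0 bl_seq0 bl_seq1 mul0r mul1r.
have [yk yk1] := IH (ltnW hk).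
by split; rewrite // yS // bl_seqSS mulrBl -mulrA -yk -yk1.
Qed.

End BalancingLike.

Lemma bl_seq_sum (R : comNzRingType) (a : R) k :
  (a - 2) * \sum_(1 <= l < k.+1) bl_seq a l = bl_seq a k.+1 - bl_seq a k - 1.
Proof.
elim: k => [|k IH]; first by rewrite big_geq // bl_seq0 bl_seq1 mulr0 subr0 subrr.
by rewrite big_nat_recr //= mulrDr IH bl_seqSS; ring.
Qed.

Section BalancingLikeReal.
Variables (R : realDomainType) (a : R).
Hypothesis a_ge2 : 2 <= a.

Let bl_seq_ge0_ltS k : 0 <= bl_seq a k /\ bl_seq a k < bl_seq a k.+1.
Proof.
elim: k => [|k [x_ge0 x_lt]]; first by rewrite bl_seq0 bl_seq1 lexx ltr01.
have x1_ge0 : 0 <= bl_seq a k.+1 by lra.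
have : 0 <= (a - 2) * bl_seq a k.+1 by rewrite mulr_ge0 // subr_ge0.
by split; [lra | rewrite bl_seqSS; nra].
Qed.

Lemma bl_seq_ge0 k : 0 <= bl_seq a k.
Proof. by case: (bl_seq_ge0_ltS k). Qed.

Lemma bl_seq_gt0 k : (0 < k)%N -> 0 < bl_seq a k.
Proof. by case: k => // k _; case: (bl_seq_ge0_ltS k) => ? ?; lra. Qed.

Lemma bl_seq_sum_gt0 n : (0 < n)%N -> 0 < \sum_(1 <= l < n.+1) bl_seq a l.
Proof.
move=> n_gt0; rewrite big_nat_recr //=.
have : 0 <= \sum_(1 <= l < n) bl_seq a l by apply: sumr_ge0 => l _; apply: bl_seq_ge0.
have := bl_seq_gt0 n_gt0; lra.
Qed.

End BalancingLikeReal.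

Lemma sum_nat1_rev (R : nmodType) (F : nat -> R) n :
  \sum_(1 <= l < n.+1) F l = \sum_(i < n) F (n - i)%N.
Proof.
rewrite big_add1 /= big_mkord (reindex_inj rev_ord_inj) /=.
by apply: eq_bigr => i _; congr F; have := ltn_ord i; lia.
Qed.

(* Padding with zeros makes the balance equation of the last column an
   instance of the interior one. *)
Definition rvnth (R : nmodType) n (v : 'rV[R]_n) (k : nat) : R :=
  if insub k is Some i then v ord0 i else 0.

Section RowVectorCoordinates.
Variables (R : nmodType) (n : nat) (v : 'rV[R]_n).

Lemma rvnth_ord (i : 'I_n) : rvnth v i = v ord0 i.
Proof. by rewrite /rvnth valK. Qed.

Lemma rvnth_default k : (n <= k)%N -> rvnth v k = 0.
Proof. by move=> hk; rewrite /rvnth insubN // -leqNgt. Qed.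

End RowVectorCoordinates.

Lemma sum_mul_indicator (R : pzSemiRingType) n (v : 'rV[R]_n) k :
  \sum_(i < n) v ord0 i * ((i : nat) == k)%:R = rvnth v k.
Proof.
rewrite /rvnth; case: insubP => [i _ <-|k_ge].
- rewrite (bigD1 i) //= eqxx mulr1 big1 ?addr0 // => j /negbTE.
  by rewrite -val_eqE => ->; rewrite mulr0.
- apply: big1 => i _; suff /negbTE -> : (i : nat) != k by rewrite mulr0.
  by apply: contraNneq k_ge => <-.
Qed.

Section TransitionMatrix.
Variables (R : fieldType) (a : R) (n : nat).
Hypothesis n_ge3 : (3 <= n)%N.
Local Notation P := (Pmat a n).
Local Notation x := (bl_seq a).

Lemma Pmat_col0 (i j : 'I_n) : (j : nat) = 0%N ->
  P i j = 1 - 2 / a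
          + a^-1 * (((i : nat) == 0%N)%:R + ((i : nat) == 1%N)%:R + ((i : nat) == n.-1)%:R).
Proof.
move=> j0; rewrite mxE j0 /=; have := ltn_ord i; move: (i : nat) => i' hi.
repeat (case: eqP => //= ?); try lia.
all: rewrite ?addr0 ?add0r ?mulr0 ?mulr1; ring.
Qed.

Lemma Pmat_col (i j : 'I_n) : (0 < j)%N ->
  P i j = a^-1 * (((i : nat) == j.-1)%:R + ((i : nat) == j.+1)%:R).
Proof.
move=> j_gt0; rewrite mxE; have := ltn_ord i; have := ltn_ord j.
move: (i : nat) (j : nat) j_gt0 => i' j' ? ? ?.
repeat (case: eqP => //= ?); try lia.
all: by rewrite ?addr0 ?add0r ?mulr0 ?mulr1.
Qed.

Lemma mulmx_Pmat_col0 (v : 'rV_n) (j : 'I_n) : (j : nat) = 0%N ->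
  (v *m P) ord0 j = (1 - 2 / a) * \sum_(i < n) v ord0 i
                    + a^-1 * (rvnth v 0 + rvnth v 1 + rvnth v n.-1).
Proof.
move=> j0; rewrite mxE.
under eq_bigr => i _ do rewrite Pmat_col0 // mulrDr (mulrCA (v ord0 i)) !mulrDr.
rewrite !big_split /= -!mulr_sumr -!mulr_suml !sum_mul_indicator; ring.
Qed.

Lemma mulmx_Pmat_col (v : 'rV_n) (j : 'I_n) : (0 < j)%N ->
  (v *m P) ord0 j = a^-1 * (rvnth v j.-1 + rvnth v j.+1).
Proof.
move=> j_gt0; rewrite mxE.
under eq_bigr => i _ do rewrite Pmat_col // mulrCA mulrDr.
by rewrite -mulr_sumr big_split /= !sum_mul_indicator.
Qed.

Lemma Pmat_stationary_bl_seq (pi : 'rV_n) : a != 0 -> pi *m P = pi ->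
  forall k, rvnth pi k = x (n - k) * rvnth pi n.-1.
Proof.
move=> a0 stat.
pose y k := rvnth pi (n - k).
have y0 : y 0%N = 0 by rewrite /y subn0 rvnth_default.
have yS k : (k.+2 <= n)%N -> y k.+2 = a * y k.+1 - y k.
  move=> hk; have hj : (n - k.+1 < n)%N by lia.
  have := congr1 (fun M : 'rV_n => M ord0 (Ordinal hj)) stat.
  rewrite mulmx_Pmat_col /= ?subn_gt0 // -(rvnth_ord pi (Ordinal hj)) /=.
  rewrite (_ : (n - k.+1).-1 = n - k.+2)%N; last by lia.
  rewrite (_ : (n - k.+1).+1 = n - k)%N; last by lia.
  by rewrite /y => <-; rewrite mulrA mulfV // mul1r addrK.
move=> k; case: (leqP k n) => hk.
- by rewrite -[in LHS](subKn hk) -/(y _) (bl_seq_unique y0 yS) ?leq_subr // /y subn1.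
- have -> : (n - k = 0)%N by lia.
  by rewrite rvnth_default ?(ltnW hk) // bl_seq0 mul0r.
Qed.

Lemma bl_seq_Pmat_stationary (pi : 'rV_n) (c : R) : a != 0 ->
  (forall i : 'I_n, pi ord0 i = x (n - i) * c) -> pi *m P = pi.
Proof.
move=> a0 piE.
have piE' k : rvnth pi k = x (n - k) * c.
  case: (ltnP k n) => hk; first by rewrite -[k]/(val (Ordinal hk)) rvnth_ord piE.
  by rewrite rvnth_default // (_ : n - k = 0)%N ?bl_seq0 ?mul0r //; lia.
apply/rowP => j; case: (posnP j) => [j0 | j_gt0].
- rewrite mulmx_Pmat_col0 // piE j0 !piE' subn0 subn1.
  under eq_bigr => i _ do rewrite piE.
  rewrite -mulr_suml -sum_nat1_rev (_ : n - n.-1 = 1)%N; last by lia.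
  have := bl_seq_sum a n.-1.+1.
  rewrite bl_seqSS prednK ?(ltn_trans _ n_ge3) // => sum_id.
  rewrite (_ : (1 - 2 / a) * _ = a^-1 * ((a - 2) * \sum_(1 <= l < n.+1) x l) * c).
    by rewrite sum_id bl_seq1; field.
  by field.
- rewrite mulmx_Pmat_col // !piE' piE.
  have j_lt := ltn_ord j.
  rewrite (_ : n - j.-1 = (n - j.+1).+2)%N; last by lia.
  rewrite (_ : n - j = (n - j.+1).+1)%N; last by lia.
  by rewrite bl_seqSS; field.
Qed.

End TransitionMatrix.

Theorem theorem5p1 (R : realFieldType) (A n : nat) (hA : (2 < A)%N) (hn : (3 <= n)%N)
  (pi : 'rV[R]_n) :
  (prob_vec pi /\ pi *m Pmat (A%:R : R) n = pi) <->
  (forall i : 'I_n,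
     pi ord0 i = bl_seq (A%:R : R) (n - i) / \sum_(1 <= l < n.+1) bl_seq (A%:R : R) l).
Proof.
set a : R := A%:R; set S := \sum_(1 <= l < n.+1) bl_seq a l.
have a_ge2 : 2 <= a by rewrite ler_nat ltnW.
have a0 : a != 0 by rewrite pnatr_eq0 -lt0n (ltn_trans _ hA).
have S_gt0 : 0 < S by apply: bl_seq_sum_gt0; rewrite // (ltn_trans _ hn).
have S0 : S != 0 by rewrite gt_eqF.
have S_rev : S = \sum_(i < n) bl_seq a (n - i) by rewrite /S sum_nat1_rev.
split.
- move=> [[_ sum1] /(Pmat_stationary_bl_seq hn a0) piE] i.
  set c := rvnth pi n.-1 in piE.
  have Sc : S * c = 1.
    by rewrite -sum1 S_rev mulr_suml; apply: eq_bigr => j _; rewrite -rvnth_ord piE.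
  by rewrite -rvnth_ord piE -(mulKf S0 c) Sc mulr1.
- move=> piE; split; last exact: (bl_seq_Pmat_stationary (c := S^-1) hn a0).
  split=> [i | ]; first by rewrite piE; apply: divr_ge0; [apply: bl_seq_ge0 | apply: ltW].
  by rewrite -(divff S0) {1}S_rev mulr_suml; apply: eq_bigr => i _; rewrite piE.
Qed.
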